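(* Let $\alpha>0$, $\gamma<0$, $\theta=(\alpha,-(\alpha+\gamma)/4,\gamma)$, and let $\mathcal{R}_\theta(1)$ be the moduli space of $\theta$-semistable representations of $\mathbf{Q}$ of dimension vector $(1,4,1)$. If $\gamma<-\alpha$, the points of $\mathcal{R}_\theta(1)$ are exactly the (isomorphism classes of) representations that are globally surjective and locally injective. If $\gamma>-\alpha$, the points of $\mathcal{R}_\theta(1)$ are exactly the representations that are globally injective and locally surjective.
   Context: The quiver $\mathbf{Q}$ has vertices $-1,0,1$, arrows $\eta_0,\dots,\eta_3:-1\to0$, $\phi_0,\dots,\phi_3:0\to1$ and relations $\phi_i\eta_j+\phi_j\eta_i=0$; a representation consists of vector spaces $V_{-1},V_0,V_1$ and linear maps $f_i:V_{-1}\to V_0$, $g_i:V_0\to V_1$ with $g_if_j+g_jf_i=0$. $R$ is globally injective (resp. surjective) if $\sum\lambda_if_i$ is injective (resp. $\sum\lambda_ig_i$ surjective) for all $\lambda\in\mathbb{C}^4\setminus\{0\}$; locally injective (resp. surjective) if this holds for all $[\lambda]\in\mathbb{P}^3$ outside a closed subset of codimension at least 2. $R$ is $\theta$-semistable (resp. stable) if $\theta\cdot\dim R=0$ and $\theta\cdot\dim S\le0$ for all subrepresentations $S$ (resp. $<0$ for all nonzero proper $S$); $\mathcal{R}_\theta(1)$ is King's GIT moduli space. *)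

From HB Require Import structures.
From mathcomp Require Import all_boot all_order all_algebra.
From mathcomp Require Import complex Rstruct.
From mathcomp Require Import mpoly.

Set Implicit Arguments.
Unset Strict Implicit.
Unset Printing Implicit Defensive.

Import GRing.Theory Num.Theory.
Local Open Scope ring_scope.

Definition RR : rcfType := Rdefinitions.R.
Definition CC : numClosedFieldType := RR[i].

(* Representations of the quiver Q with vertices -1, 0, 1, arrows
   eta_0..eta_3 : -1 -> 0, phi_0..phi_3 : 0 -> 1.
   A representation of dimension vector (n, m, k) is given, after a choice
   of bases, by V_{-1} = C^n, V_0 = C^m, V_1 = C^k (row vectors) and
   matrices f i : 'M_(n,m), g i : 'M_(m,k), acting on row vectors by
   v |-> v *m f i, v |-> v *m g i. The composite g_i o f_j is thus the
   matrix f j *m g i. *)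

Definition is_rep n m k (f : 'I_4 -> 'M[CC]_(n, m)) (g : 'I_4 -> 'M[CC]_(m, k))
  : Prop :=
  forall i j : 'I_4, f j *m g i + f i *m g j = 0.

(* Subrepresentations: triples of subspaces (encoded as row spaces of square
   matrices) stable under all arrows. *)
Definition is_subrep n m k (f : 'I_4 -> 'M[CC]_(n, m)) (g : 'I_4 -> 'M[CC]_(m, k))
  (Sm : 'M[CC]_n) (S0 : 'M[CC]_m) (S1 : 'M[CC]_k) : Prop :=
  forall i : 'I_4, (Sm *m f i <= S0)%MS /\ (S0 *m g i <= S1)%MS.

Definition theta_dot (th : RR * RR * RR) (a b c : nat) : RR :=
  th.1.1 * a%:R + th.1.2 * b%:R + th.2 * c%:R.

Definition semistable (th : RR * RR * RR) n m k
  (f : 'I_4 -> 'M[CC]_(n, m)) (g : 'I_4 -> 'M[CC]_(m, k)) : Prop :=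
  theta_dot th n m k = 0 /\
  forall Sm S0 S1, is_subrep f g Sm S0 S1 ->
    theta_dot th (\rank Sm) (\rank S0) (\rank S1) <= 0.

Definition stable (th : RR * RR * RR) n m k
  (f : 'I_4 -> 'M[CC]_(n, m)) (g : 'I_4 -> 'M[CC]_(m, k)) : Prop :=
  theta_dot th n m k = 0 /\
  forall Sm S0 S1, is_subrep f g Sm S0 S1 ->
    (\rank Sm, \rank S0, \rank S1) != (0%N, 0%N, 0%N) ->
    (\rank Sm, \rank S0, \rank S1) != (n, m, k) ->
    theta_dot th (\rank Sm) (\rank S0) (\rank S1) < 0.

Definition lincomb p q (lam : 'rV[CC]_4) (f : 'I_4 -> 'M[CC]_(p, q)) : 'M[CC]_(p, q) :=
  \sum_(i < 4) lam 0 i *: f i.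

(* A matrix M : 'M_(p,q) acting by v |-> v *m M is injective iff its rows are
   free, surjective iff its rows span C^q. *)

(* Zariski topology on P^3 = (C^4 \ 0)/C^*.  Subsets of P^3 are encoded as
   predicates on C^4 (only their values on nonzero vectors matter). *)
Definition pset := 'rV[CC]_4 -> Prop.

Definition pt_eval (p : {mpoly CC[4]}) (x : 'rV[CC]_4) : CC := p.@[fun i => x 0 i].

Definition pclosed (Z : pset) : Prop :=
  exists F : {mpoly CC[4]} -> Prop,
    (forall p, F p -> exists d : nat, p \is d.-homog) /\
    (forall x : 'rV[CC]_4, x != 0 -> (Z x <-> forall p, F p -> pt_eval p x = 0)).

Definition psubset (Z W : pset) : Prop := forall x : 'rV[CC]_4, x != 0 -> Z x -> W x.

Definition pstrict (Z W : pset) : Prop := psubset Z W /\ ~ psubset W Z.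

Definition pirreducible (Z : pset) : Prop :=
  pclosed Z /\ (exists x : 'rV[CC]_4, x != 0 /\ Z x) /\
  forall Z1 Z2 : pset, pclosed Z1 -> pclosed Z2 ->
    psubset Z (fun x => Z1 x \/ Z2 x) -> psubset Z Z1 \/ psubset Z Z2.

(* Z (closed) has dimension <= 1, i.e. codimension >= 2 in P^3: there is no
   chain W0 < W1 < W2 of irreducible closed subsets contained in Z. *)
Definition pcodim_ge2 (Z : pset) : Prop :=
  pclosed Z /\
  ~ (exists W0 W1 W2 : pset,
        pirreducible W0 /\ pirreducible W1 /\ pirreducible W2 /\
        pstrict W0 W1 /\ pstrict W1 W2 /\ psubset W2 Z).

Definition globally_injective n m (f : 'I_4 -> 'M[CC]_(n, m)) : Prop :=
  forall lam : 'rV[CC]_4, lam != 0 -> row_free (lincomb lam f).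

Definition globally_surjective m k (g : 'I_4 -> 'M[CC]_(m, k)) : Prop :=
  forall lam : 'rV[CC]_4, lam != 0 -> row_full (lincomb lam g).

Definition locally_injective n m (f : 'I_4 -> 'M[CC]_(n, m)) : Prop :=
  exists Z : pset, pcodim_ge2 Z /\
    forall lam : 'rV[CC]_4, lam != 0 -> ~ Z lam -> row_free (lincomb lam f).

Definition locally_surjective m k (g : 'I_4 -> 'M[CC]_(m, k)) : Prop :=
  exists Z : pset, pcodim_ge2 Z /\
    forall lam : 'rV[CC]_4, lam != 0 -> ~ Z lam -> row_full (lincomb lam g).

(** The relations say exactly that the 4 x 4 matrix of pairings [g_j o f_i]
   is skew-symmetric; hence it is either zero or of rank at least 2.  Writing
   [F] for the matrix with rows [f_i] and [G] for the one with columns [g_j],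
   global surjectivity of [g] means that [G] is invertible, and the locus where
   [sum lambda_i f_i] fails to be injective is the projectivised kernel of [F].
   In P^3 a projective line has codimension 2 (an irreducible closed subset of
   a line is a point or the line, since a homogeneous form vanishes at finitely
   many of its points unless it vanishes on all of it), while P^3 itself
   contains the chain point < line < plane.  So when [G] is invertible, [f] is
   locally injective iff [F <> 0]: then [rank F >= rank (F G) >= 2].
   On the stability side, for [gamma < -alpha] a subrepresentation can have
   positive weight only if it is [(0, ker G, 0)] or, when all [f_i] vanish,
   [(C, 0, 0)]; every other proper nonzero one has negative weight.  Hence
   semistability and stability both mean [G] invertible and [F <> 0].
   Dually, for [gamma > -alpha] the test objects are [(C, span f_i, C)] and,
   when all [g_j] vanish, [(C, C^4, 0)], and both notions mean [F] invertible
   and [G <> 0]. *)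

From HB Require Import structures.
From mathcomp Require Import all_boot all_order all_algebra.
From mathcomp Require Import complex Rstruct.
From mathcomp Require Import mpoly.
From mathcomp Require Import lra.
From Stdlib Require Import Classical.
Set Implicit Arguments.
Unset Strict Implicit.
Unset Printing Implicit Defensive.

Import Order.TTheory GRing.Theory Num.Theory.
Local Open Scope ring_scope.

(** * Polynomials and matrices *)

Lemma poly_eq0_punctured (R : numDomainType) (Q : {poly R}) :
  (forall t, t != 0 -> Q.[t] = 0) -> Q = 0.
Proof.
move=> Q0; apply: (@roots_geq_poly_eq0 _ _ [seq i.+1%:R | i <- iota 0 (size Q)]).
- by apply/allP => _ /mapP[i _ ->]; apply/rootP/Q0; rewrite pnatr_eq0.
- by rewrite map_inj_uniq ?iota_uniq // => i j /eqP; rewrite eqr_nat => /eqP[].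
- by rewrite size_map size_iota.
Qed.

Lemma sub_addsmx_rV (K : fieldType) n (x y z : 'rV[K]_n) :
  (z <= x + y)%MS -> exists a b, z = a *: x + b *: y.
Proof.
case/sub_addsmxP => -[u v] /= ->; exists (u 0 0), (v 0 0).
by rewrite {1}[u]mx11_scalar {1}[v]mx11_scalar !mul_scalar_mx.
Qed.

Lemma rV_sub_rev (K : fieldType) n (u v : 'rV[K]_n) :
  u != 0 -> (u <= v)%MS -> (v <= u)%MS.
Proof.
move=> unz /sub_rVP[a uav].
have a0 : a != 0 by apply: contraNneq unz => a0; rewrite uav a0 scale0r.
by apply/sub_rVP; exists a^-1; rewrite uav scalerA mulVf ?scale1r.
Qed.

Lemma mxrank_adds_rV_gt1 (K : fieldType) n (u v : 'rV[K]_n) :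
  u != 0 -> ~~ (v <= u)%MS -> (1 < \rank (u + v)%MS)%N.
Proof.
move=> unz nvu; suff : (\rank u < \rank (u + v))%N by rewrite rank_rV unz.
have : (u < u + v)%MS.
  by rewrite ltmxE addsmxSl /=; apply: contra nvu => /(submx_trans (addsmxSr u v)).
by rewrite ltmxErank => /andP[].
Qed.

Lemma row_free_rVP (K : fieldType) n p (A : 'M[K]_(n, p)) :
  row_free A <-> forall v : 'rV_n, v != 0 -> v *m A != 0.
Proof.
rewrite -kermx_eq0; split => [/eqP k0 v | Ainj].
  by move=> vnz; apply: contraNneq vnz => /sub_kermxP; rewrite k0 submx0.
apply/eqP/row_matrixP => i; rewrite row0; apply/eqP; apply: contraT => /Ainj.
by rewrite -row_mul mulmx_ker row0 eqxx.
Qed.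

Lemma skew_mxrank_gt1 (K : fieldType) n (A : 'M[K]_n) :
  2%:R != 0 :> K -> A^T = - A -> A != 0 -> (1 < \rank A)%N.
Proof.
move=> two_nz skewA Anz.
have skew i j : A j i = - A i j by have := congr1 (fun B : 'M_n => B i j) skewA; rewrite !mxE.
have diag0 i : A i i = 0.
  suff : A i i * 2%:R == 0 by rewrite mulf_eq0 (negbTE two_nz) orbF => /eqP.
  by rewrite mulr_natr mulr2n {1}skew addNr.
have /existsP[[i j] /= Aij] : [exists ij : 'I_n * 'I_n, A ij.1 ij.2 != 0].
  apply: contraNT Anz => /existsPn Aeq0; apply/eqP/matrixP => i j.
  by rewrite mxE; apply/eqP/negPn/(Aeq0 (i, j)).
have ui_nz : row i A != 0.
  by apply: contraNneq Aij => /matrixP/(_ 0 j); rewrite !mxE => ->.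
have nsub : ~~ (row j A <= row i A)%MS.
  apply/negP => /sub_rVP[a /matrixP/(_ 0 i)]; rewrite !mxE diag0 mulr0 skew => /eqP.
  by rewrite oppr_eq0 (negbTE Aij).
apply: (leq_trans (mxrank_adds_rV_gt1 ui_nz nsub)); apply: mxrankS.
by rewrite addsmx_sub !row_sub.
Qed.

Lemma mx11_unitmxE (K : fieldType) (S : 'M[K]_1) : (S \in unitmx) = (S != 0).
Proof. by rewrite -row_free_unit /row_free rank_rV; case: (S != 0). Qed.

Lemma submx_unitMl (K : fieldType) n p q (S : 'M[K]_n) (A : 'M_(n, p)) (B : 'M_(q, p)) :
  S \in unitmx -> (S *m A <= B)%MS -> (A <= B)%MS.
Proof. by move=> Su; apply: submx_trans; rewrite -{1}(mulKmx Su A) submxMl. Qed.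

Lemma row_free_trmx (K : fieldType) n (A : 'M[K]_n) : row_free A^T = row_free A.
Proof. by rewrite !row_free_unit unitmx_tr. Qed.

(** * Closed subsets of P^3 *)

Lemma pt_evalZ d (p : {mpoly CC[4]}) (c : CC) (x : 'rV[CC]_4) :
  p \is d.-homog -> pt_eval p (c *: x) = c ^+ d * pt_eval p x.
Proof.
move=> /dhomogP hp; rewrite /pt_eval !mevalE big_distrr /=.
apply: eq_big_seq => m /hp hm; rewrite mulrCA; congr (_ * _).
under eq_bigr do rewrite mxE exprMn.
by rewrite big_split /= prodrXr -hm (esym (mdegE m)).
Qed.

Lemma pt_eval_line (p : {mpoly CC[4]}) (x y : 'rV[CC]_4) :
  exists Q : {poly CC}, forall t, Q.[t] = pt_eval p (x + t *: y).
Proof.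
exists (\sum_(m <- msupp p) p@_m *: \prod_(i < 4) ((x 0 i)%:P + y 0 i *: 'X) ^+ m i).
move=> t; rewrite /pt_eval mevalE horner_sum; apply: eq_bigr => m _.
rewrite hornerZ horner_prod; congr (_ * _); apply: eq_bigr => i _.
by rewrite horner_exp hornerD hornerC hornerZ hornerX !mxE mulrC.
Qed.

Lemma homog_vanish_line d (p : {mpoly CC[4]}) (x y : 'rV[CC]_4) : p \is d.-homog ->
  (forall t, pt_eval p (x + t *: y) = 0) -> pt_eval p y = 0.
Proof.
move=> hp px; have [R hR] := pt_eval_line p y x.
suff R0 : R = 0 by rewrite -[y]addr0 -(scale0r x) -hR R0 horner0.
apply: poly_eq0_punctured => s s0; rewrite hR.
have -> : y + s *: x = s *: (x + s^-1 *: y).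
  by rewrite scalerDr scalerA mulfV // scale1r addrC.
by rewrite (pt_evalZ _ _ hp) px mulr0.
Qed.

Lemma pclosed_ext (Z Z' : pset) :
  (forall x, x != 0 -> Z x <-> Z' x) -> pclosed Z -> pclosed Z'.
Proof.
move=> ZZ' [F [hF eF]]; exists F; split => // x xnz.
by split => [/(ZZ' x xnz)/(eF x xnz) | /(eF x xnz)/(ZZ' x xnz)].
Qed.

Lemma pclosedZ (Z : pset) x c : pclosed Z -> x != 0 -> c != 0 -> Z x -> Z (c *: x).
Proof.
move=> [F [hF eF]] xnz cnz Zx.
have cxnz : c *: x != 0 by rewrite scaler_eq0 negb_or cnz.
apply/(eF _ cxnz) => p Fp; have [d hd] := hF _ Fp.
by rewrite (pt_evalZ _ _ hd) ((eF x xnz).1 Zx p Fp) mulr0.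
Qed.

Lemma zero_locus_witness (F : {mpoly CC[4]} -> Prop) (P : Prop) x :
  (P <-> forall p, F p -> pt_eval p x = 0) -> ~ P -> exists p, F p /\ pt_eval p x != 0.
Proof.
move=> PF nP; apply: NNPP => nex; apply/nP/PF => p Fp.
by apply: NNPP => /eqP px; apply: nex; exists p.
Qed.

Lemma pclosed_sep (Z : pset) x : pclosed Z -> x != 0 -> ~ Z x ->
  exists d (p : {mpoly CC[4]}), [/\ p \is d.-homog,
    forall z, z != 0 -> Z z -> pt_eval p z = 0 & pt_eval p x != 0].
Proof.
move=> [F [hF eF]] xnz nZx; have [p [Fp px]] := zero_locus_witness (eF x xnz) nZx.
have [d hd] := hF p Fp; exists d, p; split => // z znz Zz.
exact: (eF z znz).1.
Qed.

Lemma not_psubset (Z W : pset) : ~ psubset Z W -> exists x, [/\ x != 0, Z x & ~ W x].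
Proof.
move=> nZW; apply: NNPP => nex; apply: nZW => x xnz Zx.
by apply: NNPP => nWx; apply: nex; exists x.
Qed.

Lemma pclosed0 : pclosed (fun _ => False).
Proof.
exists (fun p => p = 1); split => [_ ->|x _]; first by exists 0%N; exact: dhomog1.
by split => // /(_ 1 erefl); rewrite /pt_eval meval1 => /eqP; rewrite oner_eq0.
Qed.

Lemma pclosedU (Z1 Z2 : pset) : pclosed Z1 -> pclosed Z2 -> pclosed (fun x => Z1 x \/ Z2 x).
Proof.
move=> [F1 [hF1 eF1]] [F2 [hF2 eF2]].
exists (fun p => exists p1 p2, [/\ F1 p1, F2 p2 & p = p1 * p2]); split.
  move=> _ [p1 [p2 [F1p1 F2p2 ->]]]; have [d1 hd1] := hF1 _ F1p1.
  by have [d2 hd2] := hF2 _ F2p2; exists (d1 + d2)%N; exact: dhomogM.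
move=> x xnz; split => [Zx _ [p1 [p2 [F1p1 F2p2 ->]]]|van].
  rewrite /pt_eval mevalM; case: Zx => [/(eF1 x xnz) | /(eF2 x xnz)] Zp.
    by rewrite [p1.@[_]]Zp ?mul0r.
  by rewrite [p2.@[_]]Zp ?mulr0.
case: (classic (Z1 x)) => [|nZ1x]; [by left | right].
have [p1 [F1p1 p1x]] := zero_locus_witness (eF1 x xnz) nZ1x.
apply/(eF2 x xnz) => p2 F2p2; apply/eqP.
have := van _ (ex_intro _ p1 (ex_intro _ p2 (And3 F1p1 F2p2 erefl))).
by rewrite /pt_eval mevalM => /eqP; rewrite mulf_eq0 (negbTE p1x).
Qed.

Definition psub m (U : 'M[CC]_(m, 4)) : pset := fun x => (x <= U)%MS.

Lemma pt_eval_linear (a : 'I_4 -> CC) (x : 'rV[CC]_4) :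
  pt_eval (\sum_k a k *: 'X_k) x = \sum_k a k * x 0 k.
Proof.
rewrite /pt_eval raddf_sum; apply: eq_bigr => k _.
exact: (etrans (mevalZ _ _ _) (congr1 _ (mevalXU _ _))).
Qed.

Lemma pclosed_psub m (U : 'M[CC]_(m, 4)) : pclosed (psub U).
Proof.
exists (fun p => exists r, p = \sum_k cokermx U k r *: 'X_k); split.
  move=> _ [r ->]; exists 1%N; apply: rpred_sum => k _; apply: rpredZ.
  by rewrite dhomogX; apply/eqP; exact: mdeg1.
have coordE x r : pt_eval (\sum_k cokermx U k r *: 'X_k) x = (x *m cokermx U) 0 r.
  by rewrite pt_eval_linear mxE; apply: eq_bigr => k _; rewrite mulrC.
move=> x _; rewrite /psub submxE; split => [/eqP xU0 _ [r ->] | van].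
  by rewrite coordE xU0 mxE.
by apply/eqP/matrixP => i r; rewrite ord1 [RHS]mxE -coordE; apply: van; exists r.
Qed.

Lemma psubset_psubP m1 m2 (A : 'M[CC]_(m1, 4)) (B : 'M[CC]_(m2, 4)) :
  psubset (psub A) (psub B) <-> (A <= B)%MS.
Proof.
split => [AB | AB x _ xA]; last exact: submx_trans xA AB.
apply/row_subP => i; have [->|ri] := eqVneq (row i A) 0; first exact: sub0mx.
exact: AB (row_sub i A).
Qed.

Lemma pclosed_points (vs : seq 'rV[CC]_4) :
  pclosed (fun x => exists2 v, v \in vs & (x <= v)%MS).
Proof.
elim: vs => [|v vs IH].
  by apply: pclosed_ext pclosed0 => x _; split => // -[].
apply: pclosed_ext (pclosedU (pclosed_psub v) IH) => x _; split.
  by case=> [xv|[w wvs xw]]; [exists v; rewrite ?mem_head | exists w; rewrite ?inE ?wvs ?orbT].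
by case=> w; rewrite inE => /orP[/eqP->|wvs] xw; [left | right; exists w].
Qed.

Lemma pirreducible_points (W : pset) (vs : seq 'rV[CC]_4) : pirreducible W ->
  psubset W (fun x => exists2 v, v \in vs & (x <= v)%MS) ->
  exists2 v, v \in vs & psubset W (psub v).
Proof.
move=> [_ [[x0 [x0nz Wx0]] irrW]]; elim: vs => [|v vs IH] Wvs.
  by have [] := Wvs x0 x0nz Wx0.
have Wv_vs : psubset W (fun x => psub v x \/ exists2 w, w \in vs & (x <= w)%MS).
  move=> x xnz /(Wvs x xnz)[w]; rewrite inE => /orP[/eqP->|wvs] xw; first by left.
  by right; exists w.
case: (irrW _ _ (pclosed_psub v) (pclosed_points vs) Wv_vs) => [Wv|/IH[w wvs Ww]].
  by exists v; rewrite ?mem_head.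
by exists w; rewrite ?inE ?wvs ?orbT.
Qed.

Lemma pirreducible_psub m (U : 'M[CC]_(m, 4)) : U != 0 -> pirreducible (psub U).
Proof.
move=> Unz; split; first exact: pclosed_psub.
split.
  have /existsP[i ri] : [exists i, row i U != 0].
    apply: contraNT Unz => /existsPn U0; apply/eqP/row_matrixP => i.
    by rewrite row0; apply/eqP/negPn/U0.
  by exists (row i U); split => //; exact: row_sub.
move=> Z1 Z2 c1 c2 UZ; apply: NNPP => /not_or_and[/not_psubset[x [xnz Ux nZ1x]]].
move=> /not_psubset[y [ynz Uy nZ2y]].
have Z2x : Z2 x by case: (UZ x xnz Ux).
have [yx|nyx] := boolP (y <= x)%MS.
  have [c yc] := sub_rVP yx; have cnz : c != 0.
    by apply: contraNneq ynz => c0; rewrite yc c0 scale0r.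
  by apply: nZ2y; rewrite yc; exact: pclosedZ.
have line_nz t : x + t *: y != 0.
  apply: contra nyx => /eqP xty; have [t0|tnz] := eqVneq t 0.
    by move: xnz; rewrite -xty t0 scale0r addr0 eqxx.
  apply/sub_rVP; exists (- t^-1); rewrite scaleNr -scalerN -(addr0 (- x)) -xty.
  by rewrite addKr scalerA mulVf ?scale1r.
have [d1 [p1 [hp1 Z1p1 p1x]]] := pclosed_sep c1 xnz nZ1x.
have [d2 [p2 [hp2 Z2p2 p2y]]] := pclosed_sep c2 ynz nZ2y.
have [Q1 hQ1] := pt_eval_line p1 x y; have [Q2 hQ2] := pt_eval_line p2 x y.
have Q1nz : Q1 != 0.
  by apply: contraNneq p1x => Q10; rewrite -[x]addr0 -(scale0r y) -hQ1 Q10 horner0.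
have Q2nz : Q2 != 0.
  apply: contraNneq p2y => Q20; apply/eqP/(homog_vanish_line (x := x) hp2) => t.
  by rewrite -hQ2 Q20 horner0.
(* The line through [x] and [y] lies in [Z1 \/ Z2], so [p1 p2] vanishes on it. *)
suff : Q1 * Q2 == 0 by rewrite mulf_eq0 (negbTE Q1nz) (negbTE Q2nz).
apply/eqP/poly_eq0_punctured => t _; rewrite hornerM hQ1 hQ2.
have Uxy : psub U (x + t *: y) by rewrite /psub addmx_sub // scalemx_sub.
case: (UZ _ (line_nz t) Uxy) => [/(Z1p1 _ (line_nz t)) | /(Z2p2 _ (line_nz t))] ->.
  by rewrite mul0r.
by rewrite mulr0.
Qed.

Lemma pirreducible_line (W : pset) (x1 x2 : 'rV[CC]_4) :
  pirreducible W -> W x1 -> W x2 -> x1 != 0 -> ~~ (x2 <= x1)%MS ->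
  psubset W (psub (x1 + x2)%MS) -> psubset (psub (x1 + x2)%MS) W.
Proof.
move=> irrW Wx1 Wx2 x1nz nx21 WL y ynz Ly; apply: NNPP => nWy.
have x2nz : x2 != 0 by apply: contraNneq nx21 => ->; exact: sub0mx.
have [d [p [hp pW py]]] := pclosed_sep irrW.1 ynz nWy.
have [Q hQ] := pt_eval_line p x1 x2.
have line_scale (s t : CC) : s != 0 -> s *: x1 + t *: x2 = s *: (x1 + (t / s) *: x2).
  by move=> snz; rewrite scalerDr scalerA mulrCA divff ?mulr1.
have pQ (s t : CC) : s != 0 -> pt_eval p (s *: x1 + t *: x2) = s ^+ d * Q.[t / s].
  by move=> snz; rewrite line_scale // (pt_evalZ _ _ hp) hQ.
have Qnz : Q != 0.
  apply: contraNneq py => Q0; have [a [b ->]] := sub_addsmx_rV Ly.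
  have [->|anz] := eqVneq a 0; last by rewrite pQ // Q0 horner0 mulr0.
  by rewrite scale0r add0r (pt_evalZ _ _ hp) pW ?mulr0.
have [rs Qrs] := closed_field_poly_normal Q.
have lcQ : lead_coef Q != 0 by rewrite lead_coef_eq0.
(* Off [x2], the points of [W] on the line are the [x1 + r x2] with [Q.[r] = 0]. *)
pose pts := x2 :: [seq x1 + r *: x2 | r <- rs].
have [v _ Wv] : exists2 v, v \in pts & psubset W (psub v).
  apply: (pirreducible_points irrW) => w wnz Ww.
  have [s [t wst]] := sub_addsmx_rV (WL w wnz Ww).
  have [s0|snz] := eqVneq s 0.
    by exists x2; rewrite ?mem_head // wst s0 scale0r add0r scalemx_sub.
  exists (x1 + (t / s) *: x2); last first.
    by rewrite wst line_scale // scalemx_sub.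
  rewrite inE; apply/orP; right; apply: (map_f (fun r => x1 + r *: x2)).
  rewrite -root_prod_XsubC.
  have /eqP := pW w wnz Ww; rewrite wst pQ // mulf_eq0 expf_eq0 (negbTE snz) andbF /=.
  by rewrite Qrs hornerZ mulf_eq0 (negbTE lcQ) rootE.
have vx1 := rV_sub_rev x1nz (Wv _ x1nz Wx1).
by move: nx21; rewrite (submx_trans (Wv _ x2nz Wx2) vx1).
Qed.

Lemma pirreducible_sub_rank2 (W : pset) m (U : 'M[CC]_(m, 4)) :
  pirreducible W -> (\rank U <= 2)%N -> psubset W (psub U) ->
  (exists v : 'rV_4, psubset W (psub v)) \/ psubset (psub U) W.
Proof.
move=> irrW rU WU; have [_ [[x1 [x1nz Wx1]] _]] := irrW.
case: (classic (psubset W (psub x1))) => [Wx1sub|/not_psubset[x2 [x2nz Wx2 nx21]]].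
  by left; exists x1.
right; have nx21b : ~~ (x2 <= x1)%MS by apply/negP.
have LU : (x1 + x2 <= U)%MS by rewrite addsmx_sub WU ?WU.
have UL : (U <= x1 + x2)%MS.
  rewrite -(mxrank_leqif_sup LU).2 eqn_leq mxrankS //=.
  exact: leq_trans rU (mxrank_adds_rV_gt1 x1nz nx21b).
move=> y ynz Uy; apply: (pirreducible_line irrW Wx1 Wx2 x1nz nx21b) => //.
  by move=> w wnz /(WU w wnz) wU; exact: submx_trans wU UL.
exact: submx_trans Uy UL.
Qed.

Lemma pcodim_ge2_psub m (U : 'M[CC]_(m, 4)) : (\rank U <= 2)%N -> pcodim_ge2 (psub U).
Proof.
move=> rU; split; first exact: pclosed_psub.
move=> [W0 [W1 [W2 [irr0 [irr1 [_ [[s01 ns01] [[s12 ns12] s2U]]]]]]]].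
have s1U : psubset W1 (psub U) by move=> x xnz /(s12 x xnz); exact: s2U.
case: (pirreducible_sub_rank2 irr1 rU s1U) => [[v W1v]|UW1]; last first.
  by apply: ns12 => x xnz W2x; apply: UW1 => //; exact: s2U.
apply: ns01 => x xnz W1x; have [c0W0 [[x0 [x0nz W0x0]] _]] := irr0.
have vx0 := rV_sub_rev x0nz (W1v _ x0nz (s01 _ x0nz W0x0)).
have [c xc] := sub_rVP (submx_trans (W1v _ xnz W1x) vx0).
have cnz : c != 0 by apply: contraNneq xnz => c0; rewrite xc c0 scale0r.
by rewrite xc; exact: pclosedZ.
Qed.

Lemma not_pcodim_ge2_total (Z : pset) : (forall x, x != 0 -> Z x) -> ~ pcodim_ge2 Z.
Proof.
move=> ZT [_]; apply.
pose P r := psub (pid_mx r : 'M[CC]_4).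
have irrP r : (0 < r <= 4)%N -> pirreducible (P r).
  by case/andP=> r0 r4; apply: pirreducible_psub; rewrite -mxrank_eq0 rank_pid_mx // -lt0n.
have strictP r s : (r < s <= 4)%N -> pstrict (P r) (P s).
  case/andP=> rs s4; have r4 := ltnW (leq_trans rs s4); split; apply/psubset_psubP.
    have -> : pid_mx r = (pid_mx r : 'M[CC]_4) *m (pid_mx s : 'M_4).
      by rewrite mul_pid_mx (minn_idPl (ltnW rs)) (minn_idPr r4).
    exact: submxMl.
  by move/mxrankS; rewrite !rank_pid_mx // leqNgt rs.
exists (P 1%N), (P 2%N), (P 3%N).
by do 5![split; first by [apply: irrP | apply: strictP]]; move=> x xnz _; apply: ZT.
Qed.

Definition locally_nonzero m (M : 'M[CC]_(4, m)) : Prop :=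
  exists Z : pset, pcodim_ge2 Z /\
    forall lam : 'rV[CC]_4, lam != 0 -> ~ Z lam -> lam *m M != 0.

Lemma locally_nonzero_rank m (M : 'M[CC]_(4, m)) : (1 < \rank M)%N -> locally_nonzero M.
Proof.
move=> rM; exists (psub (kermx M)); split.
  by apply: pcodim_ge2_psub; rewrite mxrank_ker leq_subLR addn2.
by move=> lam _ nZ; apply/eqP => /sub_kermxP.
Qed.

Lemma not_locally_nonzero0 m : ~ locally_nonzero (0 : 'M[CC]_(4, m)).
Proof.
move=> [Z [cZ nzZ]]; apply: (not_pcodim_ge2_total _ cZ) => x xnz.
by apply: NNPP => /(nzZ x xnz); rewrite mulmx0 eqxx.
Qed.

(** * Representations of Q *)

Section RepresentationMatrices.

Variable m : nat.
Implicit Types (f : 'I_4 -> 'M[CC]_(1, m)) (g : 'I_4 -> 'M[CC]_(m, 1)).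

Definition mxrows f : 'M[CC]_(4, m) := \matrix_(i, k) f i 0 k.
Definition mxcols g : 'M[CC]_(m, 4) := \matrix_(k, j) g j k 0.

Lemma row_mxrows f i : row i (mxrows f) = f i.
Proof. by apply/matrixP => a b; rewrite ord1 !mxE. Qed.

Lemma col_mxcols g j : col j (mxcols g) = g j.
Proof. by apply/matrixP => a b; rewrite ord1 !mxE. Qed.

Lemma mul_mxcolsE p (S : 'M[CC]_(p, m)) g r j : (S *m mxcols g) r j = (S *m g j) r 0.
Proof. by rewrite !mxE; apply: eq_bigr => k _; rewrite mxE. Qed.

Lemma mxrows_mul_mxcolsE f g i j : (mxrows f *m mxcols g) i j = (f i *m g j) 0 0.
Proof. by rewrite mul_mxcolsE -(row_mxrows f i) -row_mul [RHS]mxE. Qed.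

Lemma lincomb_rows (lam : 'rV[CC]_4) f : lincomb lam f = lam *m mxrows f.
Proof.
by rewrite mulmx_sum_row /lincomb; apply: eq_bigr => i _; rewrite row_mxrows.
Qed.

Lemma lincomb_cols (lam : 'rV[CC]_4) g : lincomb lam g = (lam *m (mxcols g)^T)^T.
Proof.
rewrite trmx_mul trmxK; apply/matrixP => k z.
by rewrite ord1 /lincomb summxE !mxE; apply: eq_bigr => j _; rewrite !mxE mulrC.
Qed.

Lemma is_rep_skew f g : is_rep f g ->
  (mxrows f *m mxcols g)^T = - (mxrows f *m mxcols g).
Proof.
move=> rep; apply/matrixP => i j; rewrite [LHS]mxE [RHS]mxE !mxrows_mul_mxcolsE.
by move: (rep i j) => /matrixP/(_ 0 0); rewrite !mxE => /eqP; rewrite addr_eq0 => /eqP.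
Qed.

Lemma globally_injectiveE f : globally_injective f <-> row_free (mxrows f).
Proof.
rewrite row_free_rVP; split => inj lam /inj; rewrite lincomb_rows /row_free rank_rV;
  by case: (_ != 0).
Qed.

Lemma globally_surjectiveE g : globally_surjective g <-> row_free (mxcols g)^T.
Proof.
rewrite row_free_rVP; split => surj lam /surj;
  by rewrite lincomb_cols /row_full mxrank_tr rank_rV; case: (_ != 0).
Qed.

Lemma locally_injectiveE f : locally_injective f <-> locally_nonzero (mxrows f).
Proof.
have E lam : row_free (lincomb lam f) = (lam *m mxrows f != 0).
  by rewrite lincomb_rows /row_free rank_rV; case: (_ != 0).
by split => -[Z [cZ hZ]]; exists Z; split => // lam lnz /(hZ lam lnz); rewrite E.
Qed.

Lemma locally_surjectiveE g : locally_surjective g <-> locally_nonzero (mxcols g)^T.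
Proof.
have E lam : row_full (lincomb lam g) = (lam *m (mxcols g)^T != 0).
  by rewrite lincomb_cols /row_full mxrank_tr rank_rV; case: (_ != 0).
by split => -[Z [cZ hZ]]; exists Z; split => // lam lnz /(hZ lam lnz); rewrite E.
Qed.

End RepresentationMatrices.

Lemma stable_semistable th n m k (f : 'I_4 -> 'M[CC]_(n, m)) (g : 'I_4 -> 'M[CC]_(m, k)) :
  stable th f g -> semistable th f g.
Proof.
move=> [th0 st]; split => // Sm S0 S1 sub.
have [[-> -> ->]|n0] := eqVneq (\rank Sm, \rank S0, \rank S1) (0, 0, 0)%N.
  by rewrite /theta_dot !mulr0 !addr0.
have [[-> -> ->]|nN] := eqVneq (\rank Sm, \rank S0, \rank S1) (n, m, k).
  by rewrite th0.
exact/ltW/st.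
Qed.

Definition theta_ag (a c : RR) : RR * RR * RR := (a, - (a + c) / 4%:R, c).

Section Stability.

Variables (alpha gamma : RR) (f : 'I_4 -> 'M[CC]_(1, 4)) (g : 'I_4 -> 'M[CC]_(4, 1)).
Let F := mxrows f.
Let G := mxcols g.

Lemma theta_ag_dim : theta_dot (theta_ag alpha gamma) 1 4 1 = 0.
Proof. by rewrite /theta_dot /=; lra. Qed.

Lemma theta_ag_top_lt0 (a b : nat) : 0 < alpha -> gamma < - alpha ->
  (a <= 1)%N -> (b <= 4)%N -> (a, b) != (1, 4)%N -> theta_dot (theta_ag alpha gamma) a b 1 < 0.
Proof.
move=> a0 ga; case: a b => [|[|//]] [|[|[|[|[|//]]]]] //= _ _ _; rewrite /theta_dot /=; lra.
Qed.

Lemma theta_ag_bottom_lt0 (b c : nat) : gamma < 0 -> - alpha < gamma ->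
  (b <= 4)%N -> (c <= 1)%N -> (b, c) != (0, 0)%N -> theta_dot (theta_ag alpha gamma) 0 b c < 0.
Proof.
move=> c0 ga; case: b c => [|[|[|[|[|//]]]]] [|[|//]] //= _ _ _; rewrite /theta_dot /=; lra.
Qed.

Lemma semistable_surj_cond : 0 < alpha -> gamma < - alpha ->
  semistable (theta_ag alpha gamma) f g -> row_free G /\ F != 0.
Proof.
move=> a0 ga [_ ss]; split.
  apply: contraT => nfree.
  have sub : is_subrep f g 0 (kermx G) 0.
    move=> i; rewrite mul0mx sub0mx submx0; split => //; apply/eqP/matrixP => r z.
    by rewrite ord1 -mul_mxcolsE mulmx_ker !mxE.
  have := ss _ _ _ sub; rewrite /theta_dot /= !mxrank0 !mulr0 add0r addr0 mxrank_ker.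
  apply: contraTT => _; rewrite -ltNge; apply: mulr_gt0; first lra.
  by rewrite ltr0n subn_gt0 ltn_neqAle nfree rank_leq_col.
apply/eqP => F0; have sub : is_subrep f g 1%:M 0 0.
  by move=> i; rewrite mul1mx -(row_mxrows f i) -/F F0 row0 mul0mx !sub0mx.
by have := ss _ _ _ sub; rewrite /theta_dot /= mxrank1 !mxrank0 !mulr0 !addr0 mulr1 leNgt a0.
Qed.

Lemma surj_cond_stable : 0 < alpha -> gamma < - alpha -> row_free G -> F != 0 ->
  stable (theta_ag alpha gamma) f g.
Proof.
move=> a0 ga Gfree Fnz; split => [|Sm S0 S1 sub n0 nN]; first exact: theta_ag_dim.
have [S10|S1nz] := eqVneq S1 0.
  have S00 : S0 = 0.
    apply: (row_free_inj Gfree); apply/matrixP => r j; rewrite mul0mx mul_mxcolsE [RHS]mxE.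
    by have := (sub j).2; rewrite S10 submx0 => /eqP ->; rewrite mxE.
  suff Sm0 : Sm = 0 by move: n0; rewrite Sm0 S00 S10 !mxrank0 eqxx.
  apply: contraNeq Fnz; rewrite -mx11_unitmxE => Smu; apply/eqP/row_matrixP => i.
  by have := submx_unitMl Smu (sub i).1; rewrite S00 submx0 row0 row_mxrows => /eqP.
rewrite [\rank S1]rank_rV S1nz /= in nN *.
apply: (theta_ag_top_lt0 a0 ga (rank_leq_row Sm) (rank_leq_col S0)).
by apply: contra nN => /eqP[-> ->].
Qed.

Lemma semistable_inj_cond : gamma < 0 -> - alpha < gamma ->
  semistable (theta_ag alpha gamma) f g -> row_free F /\ G != 0.
Proof.
move=> c0 ga [_ ss]; split.
  apply: contraT => nfree; have sub : is_subrep f g 1%:M F 1%:M.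
    by move=> i; rewrite mul1mx -(row_mxrows f i) row_sub submx1.
  have r3 : (\rank F <= 3)%N by rewrite -ltnS ltn_neqAle nfree rank_leq_col.
  have := ss _ _ _ sub; apply: contraTT => _; rewrite -ltNge !mxrank1.
  by move: (\rank F) r3 => [|[|[|[|//]]]] _; rewrite /theta_dot /=; lra.
apply/eqP => G0; have sub : is_subrep f g 1%:M 1%:M 0.
  move=> i; rewrite submx1 mul1mx; split => //.
  by rewrite -(col_mxcols g i) -/G G0 col0 sub0mx.
by have := ss _ _ _ sub; rewrite !mxrank1 mxrank0 /theta_dot /= => ?; lra.
Qed.

Lemma inj_cond_stable : gamma < 0 -> - alpha < gamma -> row_free F -> G != 0 ->
  stable (theta_ag alpha gamma) f g.
Proof.
move=> c0 ga Ffree Gnz; split => [|Sm S0 S1 sub n0 nN]; first exact: theta_ag_dim.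
have [Sm0|Smnz] := eqVneq Sm 0.
  rewrite Sm0 mxrank0 in n0 *.
  apply: (theta_ag_bottom_lt0 c0 ga (rank_leq_col S0) (rank_leq_row S1)).
  by apply: contra n0 => /eqP[-> ->].
have Smu : Sm \in unitmx by rewrite mx11_unitmxE.
have FS0 : (F <= S0)%MS.
  by apply/row_subP => i; rewrite row_mxrows; exact: submx_unitMl Smu (sub i).1.
have S0full : (1%:M <= S0)%MS.
  by apply: submx_trans FS0; rewrite sub1mx row_full_unit -row_free_unit.
have S1nz : S1 != 0.
  apply: contraNneq Gnz => S10; apply/eqP/matrixP => k j.
  have := submx_trans (submxMr (g j) S0full) (sub j).2.
  by rewrite mul1mx S10 submx0 -(col_mxcols g j) => /eqP/matrixP/(_ k 0); rewrite !mxE.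
move: nN; rewrite !rank_rV Smnz S1nz /=.
by move: S0full; rewrite sub1mx => /eqP ->.
Qed.

End Stability.

Section Conditions.

Variables (f : 'I_4 -> 'M[CC]_(1, 4)) (g : 'I_4 -> 'M[CC]_(4, 1)).
Hypothesis rep : is_rep f g.
Let F := mxrows f.
Let G := mxcols g.

Lemma pairing_rank_gt1 : F *m G != 0 -> (1 < \rank (F *m G))%N.
Proof. by apply: skew_mxrank_gt1; [rewrite pnatr_eq0 | exact: is_rep_skew]. Qed.

Lemma globally_surjective_locally_injectiveP :
  globally_surjective g /\ locally_injective f <-> row_free G /\ F != 0.
Proof.
rewrite globally_surjectiveE locally_injectiveE row_free_trmx.
split=> [[Gfree Floc] | [Gfree Fnz]]; split=> //.
  by apply/eqP => F0; move: Floc; rewrite -/F F0; exact: not_locally_nonzero0.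
apply/locally_nonzero_rank/(leq_trans (pairing_rank_gt1 _))/mxrankM_maxl.
by apply: contraNneq Fnz => FG0; apply/eqP/(row_free_inj Gfree); rewrite mul0mx.
Qed.

Lemma globally_injective_locally_surjectiveP :
  globally_injective f /\ locally_surjective g <-> row_free F /\ G != 0.
Proof.
rewrite globally_injectiveE locally_surjectiveE.
split=> [[Ffree Gloc] | [Ffree Gnz]]; split=> //.
  by apply/eqP => G0; move: Gloc; rewrite -/G G0 trmx0; exact: not_locally_nonzero0.
apply/locally_nonzero_rank; rewrite mxrank_tr.
apply/(leq_trans (pairing_rank_gt1 _))/mxrankM_maxr.
apply: contraNneq Gnz => FG0; rewrite row_free_unit in Ffree.
by rewrite -(mulKmx Ffree G) FG0 mulmx0.
Qed.

End Conditions.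

Theorem mainTheorem13 (alpha gamma : RR) :
  0 < alpha -> gamma < 0 ->
  let theta : RR * RR * RR := (alpha, - (alpha + gamma) / 4%:R, gamma) in
  (gamma < - alpha ->
     forall (f : 'I_4 -> 'M[CC]_(1, 4)) (g : 'I_4 -> 'M[CC]_(4, 1)),
       is_rep f g ->
       (semistable theta f g <-> globally_surjective g /\ locally_injective f) /\
       (stable theta f g <-> globally_surjective g /\ locally_injective f)) /\
  (- alpha < gamma ->
     forall (f : 'I_4 -> 'M[CC]_(1, 4)) (g : 'I_4 -> 'M[CC]_(4, 1)),
       is_rep f g ->
       (semistable theta f g <-> globally_injective f /\ locally_surjective g) /\
       (stable theta f g <-> globally_injective f /\ locally_surjective g)).
Proof.
move=> alpha_gt0 gamma_lt0; rewrite -/(theta_ag alpha gamma); split=> ga f g rep.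
  have := globally_surjective_locally_injectiveP rep.
  have := @semistable_surj_cond alpha gamma f g alpha_gt0 ga.
  have := @surj_cond_stable alpha gamma f g alpha_gt0 ga.
  have := @stable_semistable (theta_ag alpha gamma) _ _ _ f g.
  tauto.
have := globally_injective_locally_surjectiveP rep.
have := @semistable_inj_cond alpha gamma f g gamma_lt0 ga.
have := @inj_cond_stable alpha gamma f g gamma_lt0 ga.
have := @stable_semistable (theta_ag alpha gamma) _ _ _ f g.
tauto.
Qed.
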